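(* Let $H$ be an undirected graph and let $I$ be an induced minor of $H$. Then $\mathrm{dtd}(I)\le\mathrm{dtd}(H)$.
   Context: A graph $I$ is an induced minor of $H$ if it can be obtained from $H$ by deleting vertices and contracting edges. For a DAG $\vec H$, a source is a vertex of in-degree $0$. A DAG elimination forest of a DAG $\vec H$ is defined recursively: if $\vec H$ is empty, it is the empty forest; if the underlying undirected graph of $\vec H$ is disconnected, it is the union of DAG elimination forests (trees) of its connected components; if the underlying graph is connected and $\vec H$ has exactly one source $s$, it is the single-node tree $s$; otherwise (connected, at least two sources) it is a tree whose root is an arbitrarily chosen source $s$ of $\vec H$ and whose subtrees are the trees of a DAG elimination forest of the DAG obtained from $\vec H$ by deleting $s$ and all vertices reachable from $s$. The depth of a rooted forest is the maximum number of nodes on a root-to-leaf path. $\mathrm{dtd}(\vec H)$ is the minimum depth of a DAG elimination forest of $\vec H$; for an undirected graph $H$, $\mathrm{dtd}(H)$ is the maximum of $\mathrm{dtd}(\vec H)$ over all acyclic orientations $\vec H$ of $H$. *)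

From mathcomp Require Import all_boot.
From Stdlib Require Import ClassicalEpsilon.

Set Implicit Arguments.
Unset Strict Implicit.
Unset Printing Implicit Defensive.

Definition pbool (P : Prop) : bool :=
  if excluded_middle_informative P then true else false.

Section DAG.
Variable T : finType.

(* A digraph on T is given by its arc set D : {set T * T}; we always look at
   the sub-digraph induced on a vertex set S. *)
Definition arcs_in (D : {set T * T}) (S : {set T}) : rel T :=
  fun x y => [&& x \in S, y \in S & (x, y) \in D].

Definition und_in (D : {set T * T}) (S : {set T}) : rel T :=
  fun x y => [&& x \in S, y \in S & ((x, y) \in D) || ((y, x) \in D)].

Definition connectedb (D : {set T * T}) (S : {set T}) : bool :=
  (S != set0) && [forall x in S, forall y in S, connect (und_in D S) x y].

Definition components (D : {set T * T}) (S : {set T}) : {set {set T}} :=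
  [set [set y in S | connect (und_in D S) x y] | x in S].

Definition sources (D : {set T * T}) (S : {set T}) : {set T} :=
  [set s in S | [forall x in S, (x, s) \notin D]].

Definition reach (D : {set T * T}) (S : {set T}) (s : T) : {set T} :=
  [set y in S | connect (arcs_in D S) s y].

Inductive elim_depth (D : {set T * T}) : {set T} -> nat -> Prop :=
| ED_empty : elim_depth D set0 0
| ED_disconnected (S : {set T}) (kf : {set T} -> nat) :
    S != set0 -> ~~ connectedb D S ->
    (forall C, C \in components D S -> elim_depth D C (kf C)) ->
    elim_depth D S (\max_(C in components D S) kf C)
| ED_one_source (S : {set T}) :
    connectedb D S -> #|sources D S| = 1 -> elim_depth D S 1
| ED_root (S : {set T}) (s : T) (k : nat) :
    connectedb D S -> 1 < #|sources D S| -> s \in sources D S ->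
    elim_depth D (S :\: reach D S s) k -> elim_depth D S k.+1.

(* dtd of a DAG D on the vertex set T: the minimum depth of a DAG
   elimination forest.  (Every such depth is at most #|T|, so the minimum
   over k <= #|T| is the true minimum.) *)
Definition dtd_dag (D : {set T * T}) : nat :=
  \big[minn/#|T|]_(k < #|T|.+1 | pbool (elim_depth D [set: T] k)) k.

Definition acyclic_orientation (e : rel T) (D : {set T * T}) : bool :=
  [forall x, forall y, e x y == ((x, y) \in D) || ((y, x) \in D)] &&
  [forall x, forall y, ((x, y) \in D) ==> ~~ connect (arcs_in D [set: T]) y x].

Definition dtd (e : rel T) : nat :=
  \max_(D : {set T * T} | acyclic_orientation e D) dtd_dag D.

(* Contraction of the edge uv: v is merged into u. *)
Definition contract (e : rel T) (u v : T) : rel T :=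
  fun x y => (x != y) && [|| e x y, (x == u) && e v y | (y == u) && e x v].

(* im_reach V0 e0 V e : the graph (V, e) (vertex set V, edges e restricted
   to V) is obtained from (V0, e0) by a sequence of vertex deletions and
   edge contractions. *)
Inductive im_reach (V0 : {set T}) (e0 : rel T) : {set T} -> rel T -> Prop :=
| IM_refl : im_reach V0 e0 V0 e0
| IM_delete V e v : im_reach V0 e0 V e -> v \in V -> im_reach V0 e0 (V :\ v) e
| IM_contract V e u v : im_reach V0 e0 V e -> u \in V -> v \in V -> u != v ->
    e u v -> im_reach V0 e0 (V :\ v) (contract e u v).

End DAG.

Definition induced_minor (T' T : finType) (eI : rel T') (eH : rel T) : Prop :=
  exists (V : {set T}) (e : rel T),
    im_reach [set: T] eH V e /\
    exists f : T' -> T,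
      [/\ injective f, [set f x | x in T'] = V &
          forall x y, eI x y = e (f x) (f y)].

(* An induced minor arises from a sequence of vertex deletions and edge
   contractions, up to relabelling, so it suffices to lift every acyclic
   orientation D' of the smaller graph to an acyclic orientation D of the larger
   one such that every elimination forest of D yields one of D' of no larger
   depth.  When w is deleted, orient every edge at w towards w: then V - w is
   closed under predecessors, and restricting a DAG to a predecessor-closed set
   never increases the elimination depth (the root of a forest either lies in
   the set, and stays a source there, or reaches none of it).  When v is
   contracted into u, orient uv as u -> v and every other edge like its image
   in D'; an induction along the recursive definition of elimination forests,
   over predecessor-closed vertex sets, transports a forest of D to one of D'. *)

From Stdlib Require Import ClassicalEpsilon.
From mathcomp Require Import all_boot.

Set Implicit Arguments.
Unset Strict Implicit.
Unset Printing Implicit Defensive.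

Section ConnectPaths.
Variable T : finType.
Implicit Types (e : rel T) (W : pred T).

Lemma connect_fwd_closed e (e' : rel T) W x y :
  (forall a b, W a -> e a b -> W b /\ e' a b) ->
  W x -> connect e x y -> W y /\ connect e' x y.
Proof.
move=> ee' Wx /connectP [p pth ->] {y}.
elim: p x Wx pth => [|z p IHp] x Wx /=; first by split; rewrite ?connect0.
case/andP => exz pz; have [Wz e'xz] := ee' _ _ Wx exz.
have [Wl czl] := IHp z Wz pz; split => //.
exact: connect_trans (connect1 e'xz) czl.
Qed.

Lemma connect_bwd_closed e (e' : rel T) W x y :
  (forall a b, W b -> e a b -> W a /\ e' a b) ->
  W y -> connect e x y -> W x /\ connect e' x y.
Proof.
move=> ee' Wy /connectP [p pth yE]; subst y.
elim: p x Wy pth => [|z p IHp] x /= Wy; first by split; rewrite ?connect0.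
case/andP => exz pz; have [Wz czl] := IHp z Wy pz.
have [Wx e'xz] := ee' _ _ Wz exz; split => //.
exact: connect_trans (connect1 e'xz) czl.
Qed.

Lemma connect_neq_first e x y :
  connect e x y -> x != y -> exists2 z, e x z & connect e z y.
Proof.
move/connectP=> [[|z p] /= pth ->]; first by rewrite eqxx.
by case/andP: pth => exz pz _; exists z => //; apply/connectP; exists p.
Qed.

Lemma connect_neq_last e x y : connect e x y -> x != y -> exists z, e z y.
Proof.
move/connectP=> [p]; elim: p x => [|z p IHp] x /=; first by move=> _ ->; rewrite eqxx.
case/andP=> exz pz yE _; case: (eqVneq z y) => [<-|zy]; first by exists x.
exact: IHp pz yE zy.
Qed.

Lemma connect_subrel e (e' : rel T) :
  subrel e e' -> subrel (connect e) (connect e').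
Proof. by move=> ee'; apply: connect_sub => x y /ee' /connect1. Qed.

End ConnectPaths.

Arguments connect_subrel {T e e'}.

Section ConnectTransport.
Variables (T T' : finType) (e : rel T) (e' : rel T').

Lemma connect_homo (h : T -> T') :
  (forall a b, e a b -> connect e' (h a) (h b)) ->
  forall x y, connect e x y -> connect e' (h x) (h y).
Proof.
move=> eh x y /connectP [p pth ->] {y}.
elim: p x pth => [|z p IHp] x /=; first by rewrite connect0.
by case/andP => exz pz; apply: connect_trans (eh _ _ exz) (IHp _ pz).
Qed.

Lemma connect_lift (f : T' -> T) :
  (forall a y, e (f a) y -> exists2 b, y = f b & e' a b) ->
  forall a y, connect e (f a) y -> exists2 b, y = f b & connect e' a b.
Proof.
move=> ef a y /connectP [p pth ->] {y}.
elim: p a pth => [|z p IHp] a /=; first by exists a; rewrite ?connect0.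
case/andP=> ez pz; have [b zE e'ab] := ef _ _ ez; subst z.
have [c -> cbc] := IHp b pz; exists c => //.
exact: connect_trans (connect1 e'ab) cbc.
Qed.

End ConnectTransport.

Section EliminationDepth.
Variable T : finType.
Implicit Types (D : {set T * T}) (S U W X Y C : {set T}).

Definition acyclic D := forall x y, (x, y) \in D -> ~~ connect (arcs_in D setT) y x.

Definition depth_le D S k := exists2 k', k' <= k & elim_depth D S k'.

Definition component D S x := [set y in S | connect (und_in D S) x y].

Definition und_closed D X W :=
  forall a b, a \in W -> b \in X -> und_in D X a b -> b \in W.

Definition pred_closed D U X :=
  forall a b, a \in U -> (a, b) \in D -> b \in X -> a \in X.

Lemma depth_leW D S k k' : depth_le D S k -> k <= k' -> depth_le D S k'.
Proof. by case=> j le_jk Dj le_kk'; exists j => //; apply: leq_trans le_kk'. Qed.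

Lemma depth_le_trans D D' S S' k : depth_le D S k ->
  (forall j, elim_depth D S j -> depth_le D' S' j) -> depth_le D' S' k.
Proof. by case=> j le_jk Dj /(_ j Dj) /depth_leW; apply. Qed.

Lemma elim_depth_le D S k : elim_depth D S k -> depth_le D S k.
Proof. by exists k. Qed.

Lemma arcs_in_und D S x y : arcs_in D S x y -> und_in D S x y.
Proof. by rewrite /und_in => /and3P [-> -> ->]. Qed.

Lemma und_in_sym D S : symmetric (und_in D S).
Proof. by move=> x y; rewrite /und_in andbCA orbC. Qed.

Lemma connect_und_sym D S x y :
  connect (und_in D S) x y = connect (und_in D S) y x.
Proof. exact: (sym_connect_sym (@und_in_sym D S)). Qed.

Lemma connect_arcs_und D S x y :
  connect (arcs_in D S) x y -> connect (und_in D S) x y.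
Proof. exact/connect_subrel/arcs_in_und. Qed.

Lemma arcs_in_subset D S S' : S \subset S' -> subrel (arcs_in D S) (arcs_in D S').
Proof. by move=> /subsetP sSS' x y /and3P [/sSS' xS' /sSS' yS' xy]; apply/and3P. Qed.

Lemma und_in_subset D S S' : S \subset S' -> subrel (und_in D S) (und_in D S').
Proof. by move=> /subsetP sSS' x y /and3P [/sSS' xS' /sSS' yS' xy]; apply/and3P. Qed.

Lemma acyclic_in D S x y :
  acyclic D -> (x, y) \in D -> ~~ connect (arcs_in D S) y x.
Proof.
move=> acD /acD; apply: contra.
exact/connect_subrel/arcs_in_subset/subsetT.
Qed.
Arguments acyclic_in {D} S {x y}.

Lemma acyclic_irrefl D x : acyclic D -> (x, x) \notin D.
Proof. by move=> acD; apply/negP => /acD; rewrite connect0. Qed.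

Lemma componentP D S C :
  reflect (exists2 x, x \in S & C = component D S x) (C \in components D S).
Proof. exact: (iffP imsetP). Qed.

Lemma in_component D S x y :
  (y \in component D S x) = (y \in S) && connect (und_in D S) x y.
Proof. by rewrite inE. Qed.

Lemma mem_component D S x : x \in S -> x \in component D S x.
Proof. by move=> xS; rewrite in_component xS connect0. Qed.

Lemma component_sub D S x : component D S x \subset S.
Proof. by rewrite /component setIdE subsetIl. Qed.

Lemma component_closed D S x : und_closed D S (component D S x).
Proof.
move=> a b; rewrite !in_component => /andP [_ xa] bS ab; rewrite bS.
exact: connect_trans xa (connect1 ab).
Qed.

Lemma component_restrict D X W x :
  W \subset X -> und_closed D X W -> x \in W -> component D X x = component D W x.
Proof.
move=> WX clW xW; apply/setP => y; rewrite !in_component.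
apply/andP/andP => [[_ xy]|[yW xy]].
  have stepW a b : a \in W -> und_in D X a b -> b \in W /\ und_in D W a b.
    move=> aW ab; case/and3P: (ab) => _ bX abD.
    by rewrite /und_in aW (clW _ _ aW bX ab) abD.
  by have [] := connect_fwd_closed stepW xW xy.
split; first exact: subsetP WX _ yW.
exact: connect_subrel (und_in_subset WX) _ _ xy.
Qed.

Lemma components_sub D X W :
  W \subset X -> und_closed D X W -> components D W \subset components D X.
Proof.
move=> WX clW; apply/subsetP => _ /componentP [x xW ->].
by apply/componentP; exists x; rewrite ?(subsetP WX) ?(component_restrict WX).
Qed.

Lemma connectedbP D S : connectedb D S ->
  {in S &, forall x y, connect (und_in D S) x y}.
Proof.
by case/andP => _ /forall_inP cS x y xS; move/forall_inP: (cS x xS); apply.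
Qed.

Lemma component_connected D S x : connectedb D S -> x \in S -> component D S x = S.
Proof.
move=> cS xS; apply/setP => y; rewrite in_component andb_idr //.
exact: connectedbP.
Qed.

Lemma connectedb_component D S x : x \in S -> component D S x = S -> connectedb D S.
Proof.
move=> xS CS; apply/andP; split; first by apply/set0Pn; exists x.
have xz z : z \in S -> connect (und_in D S) x z.
  by rewrite -{1}CS in_component => /andP [].
apply/forall_inP => a aS; apply/forall_inP => b bS.
by apply: connect_trans (xz b bS); rewrite connect_und_sym xz.
Qed.

Lemma pred_closed_component D S C :
  pred_closed D setT S -> C \in components D S -> pred_closed D setT C.
Proof.
move=> clS /componentP [x _ ->] a b _ ab bC.
have bS := subsetP (@component_sub D S x) b bC; have aS := clS a b (in_setT a) ab bS.
by apply: (component_closed bC aS); rewrite /und_in aS bS ab orbT.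
Qed.

Lemma pred_closed_unreached D S s :
  pred_closed D setT S -> pred_closed D setT (S :\: reach D S s).
Proof.
move=> clS a b _ ab /setDP [bS bNr]; have aS := clS a b (in_setT a) ab bS.
rewrite inE aS andbT; move: bNr; apply: contra; rewrite !inE aS bS /= => sa.
by apply: connect_trans sa (connect1 _); rewrite /arcs_in aS bS ab.
Qed.

Lemma depth_le_components D S k :
  (forall C, C \in components D S -> depth_le D C k) -> depth_le D S k.
Proof.
move=> compk; have [->|/set0Pn [x xS]] := eqVneq S set0.
  by exists 0 => //; apply: ED_empty.
have [cS|ncS] := boolP (connectedb D S).
  by rewrite -(component_connected cS xS); apply/compk/componentP; exists x.
pose kf C := epsilon (inhabits 0) (fun j => j <= k /\ elim_depth D C j).
have kfP C : C \in components D S -> kf C <= k /\ elim_depth D C (kf C).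
  move=> /compk [j le_jk Dj].
  by apply: (epsilon_spec _ (fun j => j <= k /\ elim_depth D C j)); exists j.
exists (\max_(C in components D S) kf C); first by apply/bigmax_leqP => C /kfP [].
apply: ED_disconnected => [||C /kfP []] //.
by apply/set0Pn; exists x.
Qed.

Lemma depth_le_component D S k :
  depth_le D S k -> forall C, C \in components D S -> depth_le D C k.
Proof.
case=> j le_jk Dj C CS; apply: depth_leW le_jk; move: Dj CS.
case=> [|{}S kf _ _ Dkf|{}S cS one|{}S s i cS many sS Di].
- by case/componentP => x; rewrite inE.
- by move=> CS; exists (kf C); [exact: leq_bigmax_cond | exact: Dkf].
- case/componentP => x xS ->; rewrite component_connected //.
  by exists 1 => //; apply: ED_one_source.
- case/componentP => x xS ->; rewrite component_connected //.
  by exists i.+1 => //; apply: ED_root Di.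
Qed.

Lemma depth_le_closed D X W k :
  depth_le D X k -> W \subset X -> und_closed D X W -> depth_le D W k.
Proof.
move=> Xk WX clW; apply: depth_le_components => C CW.
exact: depth_le_component Xk _ (subsetP (components_sub WX clW) _ CW).
Qed.

Lemma und_closedI D X W Y :
  und_closed D X W -> Y \subset X -> und_closed D Y (W :&: Y).
Proof.
move=> clW YX a b /setIP [aW _] bY ab; rewrite inE bY andbT.
exact: clW aW (subsetP YX _ bY) (und_in_subset YX ab).
Qed.

Lemma reach_closed D S W s :
  W \subset S -> und_closed D S W -> s \in W -> reach D W s = reach D S s.
Proof.
move=> WS clW sW; apply/setP => y; rewrite !inE.
apply/andP/andP => [[yW sy]|[_ sy]].
  split; first exact: subsetP WS _ yW.
  exact: connect_subrel (arcs_in_subset WS) _ _ sy.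
have stepW a b : a \in W -> arcs_in D S a b -> b \in W /\ arcs_in D W a b.
  move=> aW ab; case/and3P: (ab) => _ bS abD.
  by rewrite /arcs_in aW (clW _ _ aW bS (arcs_in_und ab)) abD.
by have [] := connect_fwd_closed stepW sW sy.
Qed.

Lemma sources_subset D S W s :
  W \subset S -> s \in W -> s \in sources D S -> s \in sources D W.
Proof.
move=> WS sW /setIdP [_ /forall_inP srcS]; rewrite inE sW.
by apply/forall_inP => z /(subsetP WS); apply: srcS.
Qed.

Lemma depth_le_source D S s k :
  s \in sources D S -> depth_le D (S :\: reach D S s) k -> depth_le D S k.+1.
Proof.
have [n] := ubnP #|S|; elim: n S s k => // n IHn S s k /ltnSE leSn sS Rk.
have sS' : s \in S by case/setIdP: sS.
have [cS|ncS] := boolP (connectedb D S).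
  have [j le_jk Dj] := Rk.
  case: (ltngtP #|sources D S| 1) => [|many|one].
  - by rewrite ltnS leqn0 cards_eq0 => /eqP S0; rewrite S0 inE in sS.
  - by exists j.+1 => //; apply: ED_root cS many sS Dj.
  - by exists 1 => //; apply: ED_one_source.
have RS : S :\: reach D S s \subset S := subsetDl _ _.
apply: depth_le_components => _ /componentP [x xS ->].
set C := component D S x.
have CS : C \subset S := @component_sub D S x.
have clC : und_closed D S C := @component_closed D S x.
have CR : C :&: (S :\: reach D S s) = C :\: reach D S s.
  apply/setP => y; rewrite !inE.
  by case: (y \in S); case: (connect _ x y); case: (connect _ s y).
have [sC|sNC] := boolP (s \in C); last first.
  suff <- : C :&: (S :\: reach D S s) = C.
    exact: depth_leW (depth_le_closed Rk (subsetIr _ _) (und_closedI clC RS)) _.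
  apply/setIidPl/subsetP => y yC; rewrite !inE (subsetP CS _ yC) andbT.
  apply: contra sNC => /andP [_ sy]; rewrite inE sS'.
  case/setIdP: yC => _ /connect_trans; apply.
  by rewrite connect_und_sym connect_arcs_und.
apply: (IHn C s).
- apply: leq_trans leSn; apply: proper_card; rewrite properEneq CS andbT.
  by apply: contraNneq ncS => /(connectedb_component xS).
- exact: sources_subset CS sC sS.
- rewrite (reach_closed CS clC sC) -CR.
  exact: depth_le_closed Rk (subsetIr _ _) (und_closedI clC RS).
Qed.

End EliminationDepth.

Section Sources.
Variable T : finType.
Implicit Types (D : {set T * T}) (S U X : {set T}).

Lemma source_connect D S y : acyclic D -> y \in S ->
  exists2 s, s \in sources D S & connect (arcs_in D S) s y.
Proof.
move=> acD yS; pose anc x := [set z in S | connect (arcs_in D S) z x].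
have y_anc : y \in anc y by rewrite inE yS connect0.
have [s /setIdP [sS sy] s_min] :=
  @arg_minnP _ y (fun x => x \in anc y) (fun x => #|anc x|) y_anc.
exists s => //; rewrite inE sS; apply/forall_inP => z zS; apply/negP => zs.
have zs' : arcs_in D S z s by rewrite /arcs_in zS sS zs.
have : #|anc z| < #|anc s|.
  apply: proper_card; rewrite properE; apply/andP; split.
    apply/subsetP => w /setIdP [wS wz]; rewrite inE wS.
    exact: connect_trans wz (connect1 zs').
  apply/subsetPn; exists s; first by rewrite inE sS connect0.
  by rewrite inE sS (acyclic_in S acD zs).
by rewrite ltnNge s_min // inE zS (connect_trans (connect1 zs') sy).
Qed.

Lemma unique_source_connect D S s y : acyclic D -> #|sources D S| = 1 ->
  s \in sources D S -> y \in S -> connect (arcs_in D S) s y.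
Proof.
move=> acD /eqP/cards1P [s0 srcE] + yS; have [t + ty] := source_connect acD yS.
by rewrite srcE !inE => /eqP tE /eqP sE; rewrite sE -tE.
Qed.

Lemma elim_depth_one D X s : acyclic D -> s \in X ->
  {in X, forall y, connect (arcs_in D X) s y} -> elim_depth D X 1.
Proof.
move=> acD sX sX_all.
have srcE : sources D X = [set s].
  apply/setP => t; rewrite !inE; apply/andP/eqP => [[tX /forall_inP src_t]|->].
    apply/eqP; apply: contraT; rewrite eq_sym => st.
    have [z /and3P [zX _ zt]] := connect_neq_last (sX_all t tX) st.
    by move: (src_t z zX); rewrite zt.
  split => //; apply/forall_inP => z zX; apply/negP => /(acyclic_in X acD).
  by rewrite sX_all.
apply: ED_one_source; last by rewrite srcE cards1.
apply/andP; split; first by apply/set0Pn; exists s.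
apply/forall_inP => a aX; apply/forall_inP => b bX.
apply: connect_trans (connect_arcs_und (sX_all b bX)).
by rewrite connect_und_sym connect_arcs_und ?sX_all.
Qed.

Lemma pred_closed_connect D U X x y : pred_closed D U X ->
  y \in X -> connect (arcs_in D U) x y -> x \in X /\ connect (arcs_in D X) x y.
Proof.
move=> clX; apply: (connect_bwd_closed (W := fun z => z \in X)).
move=> a b bX /and3P [aU _ ab].
by have aX := clX a b aU ab bX; rewrite /arcs_in aX bX ab.
Qed.

End Sources.

Lemma depth_le_pred_closed (T : finType) (D : {set T * T}) (U X : {set T}) k :
  acyclic D -> elim_depth D U k -> X \subset U -> pred_closed D U X ->
  depth_le D X k.
Proof.
move=> acD DUk; elim: DUk X => {U k}
  [|U kf _ _ _ IHkf|U _ one|U s k _ _ sU _ IHk] X XU clX.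
- by move: XU; rewrite subset0 => /eqP ->; exists 0 => //; apply: ED_empty.
- apply: depth_le_components => _ /componentP [x xX ->].
  set C := component D U x.
  have xU := subsetP XU x xX.
  have CU : C \in components D U by apply/componentP; exists x.
  have clXC : und_closed D X (X :&: C).
    move=> a b /setIP [_ aC] bX ab; rewrite inE bX.
    exact: component_closed aC (subsetP XU _ bX) (und_in_subset XU ab).
  have XCk : depth_le D (X :&: C) (kf C).
    apply: IHkf => //; first exact: subsetIr.
    move=> a b aC ab /setIP [bX bC]; rewrite inE aC andbT.
    exact: clX (subsetP (component_sub D U x) a aC) ab bX.
  have xXC : x \in X :&: C by rewrite inE xX mem_component.
  rewrite (component_restrict (subsetIl _ _) clXC xXC).
  apply: depth_leW (leq_bigmax_cond _ CU); apply: depth_le_component XCk _ _.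
  by apply/componentP; exists x.
- have [->|/set0Pn [y yX]] := eqVneq X set0; first by exists 0 => //; apply: ED_empty.
  have /eqP/cards1P [s srcE] := one.
  have sU : s \in sources D U by rewrite srcE set11.
  have s_conn z : z \in X -> connect (arcs_in D U) s z.
    by move=> zX; apply: unique_source_connect acD one sU (subsetP XU _ zX).
  have [sX _] := pred_closed_connect clX yX (s_conn y yX).
  exists 1 => //; apply: (elim_depth_one acD sX) => z zX.
  exact: (pred_closed_connect clX zX (s_conn z zX)).2.
- have [sX|sNX] := boolP (s \in X); last first.
    apply: depth_leW (leqnSn k); apply: IHk.
      apply/subsetP => y yX; rewrite !inE (subsetP XU _ yX) andbT /=.
      by move: sNX; apply: contra => /(pred_closed_connect clX yX) [].
    by move=> a b /setDP [aU _]; apply: clX.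
  apply: (depth_le_source (sources_subset XU sX sU)); apply: IHk.
    apply/subsetP => y /setDP [yX yNr]; rewrite !inE (subsetP XU _ yX) andbT /=.
    move: yNr; apply: contra => sy; rewrite inE yX.
    exact: (pred_closed_connect clX yX sy).2.
  move=> a b /setDP [aU aNr] ab /setDP [bX bNr]; have aX := clX a b aU ab bX.
  rewrite inE aX andbT; move: bNr; apply: contra; rewrite !inE aX bX /= => sa.
  by apply: connect_trans sa (connect1 _); rewrite /arcs_in aX bX ab.
Qed.

Section EqArcsIn.
Variables (T : finType) (D D' : {set T * T}) (S : {set T}).
Hypothesis eqDS : {in S &, forall x y, ((x, y) \in D) = ((x, y) \in D')}.

Lemma eq_arcs_in : arcs_in D S =2 arcs_in D' S.
Proof.
move=> x y; rewrite /arcs_in.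
by case: (boolP (x \in S)) (boolP (y \in S)) => [xS|//] [yS|] /=; rewrite ?andbF ?eqDS.
Qed.

Lemma eq_und_in : und_in D S =2 und_in D' S.
Proof.
move=> x y; rewrite /und_in.
by case: (boolP (x \in S)) (boolP (y \in S)) => [xS|//] [yS|] /=; rewrite ?andbF ?eqDS.
Qed.

Lemma eq_components : components D S = components D' S.
Proof.
by apply: eq_imset => x; apply/setP => y; rewrite !inE (eq_connect eq_und_in).
Qed.

Lemma eq_connectedb : connectedb D S = connectedb D' S.
Proof.
rewrite /connectedb; congr (_ && _); apply: eq_forallb_in => x _.
by apply: eq_forallb_in => y _; rewrite (eq_connect eq_und_in).
Qed.

Lemma eq_sources : sources D S = sources D' S.
Proof.
apply/setP => s; rewrite !inE; case: (boolP (s \in S)) => //= sS.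
by apply: eq_forallb_in => z zS; rewrite eqDS.
Qed.

Lemma eq_reach s : reach D S s = reach D' S s.
Proof. by apply/setP => y; rewrite !inE (eq_connect eq_arcs_in). Qed.

End EqArcsIn.

Lemma eq_elim_depth (T : finType) (D D' : {set T * T}) (S : {set T}) k :
  {in S &, forall x y, ((x, y) \in D) = ((x, y) \in D')} ->
  elim_depth D S k -> elim_depth D' S k.
Proof.
move=> + DSk; elim: DSk => {S k}
  [|S kf S0 ncS _ IHkf|S cS one|S s k cS many sS _ IHk] eqDS.
- exact: ED_empty.
- rewrite (eq_components eqDS).
  apply: ED_disconnected; rewrite -?(eq_connectedb eqDS) //.
  move=> C; rewrite -(eq_components eqDS) => CS; apply: IHkf => // x y xC yC.
  by case/componentP: CS xC yC => z _ -> /setIdP [xS _] /setIdP [yS _]; apply: eqDS.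
- by apply: ED_one_source; rewrite -?(eq_connectedb eqDS) -?(eq_sources eqDS).
- apply: (ED_root (s := s)); rewrite -?(eq_connectedb eqDS) -?(eq_sources eqDS) //.
  rewrite -(eq_reach eqDS); apply: IHk => x y /setDP [xS _] /setDP [yS _].
  exact: eqDS.
Qed.

Lemma eq_depth_le (T : finType) (D D' : {set T * T}) (S : {set T}) k :
  {in S &, forall x y, ((x, y) \in D) = ((x, y) \in D')} ->
  depth_le D S k -> depth_le D' S k.
Proof. by move=> eqDS [j le_jk Dj]; exists j => //; apply: eq_elim_depth Dj. Qed.

Section Preimage.
Variables (T T' : finType) (f : T' -> T) (D : {set T * T}).
Hypothesis f_inj : injective f.

Definition preim_arcs : {set T' * T'} := [set p | (f p.1, f p.2) \in D].

Lemma connect_preim (e : rel T) (e' : rel T') :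
  (forall a b, e' a b = e (f a) (f b)) ->
  (forall a y, e (f a) y -> y \in codom f) ->
  forall a b, connect e' a b = connect e (f a) (f b).
Proof.
move=> ee' e_im a b; apply/idP/idP.
  by apply: connect_homo => x y; rewrite ee'; apply: connect1.
have lift x y : e (f x) y -> exists2 z, y = f z & e' x z.
  by move=> exy; have /codomP [z yE] := e_im _ _ exy; exists z; rewrite // ee' -yE.
by case/(connect_lift lift) => b' /f_inj ->.
Qed.

Section InImage.
Variable S : {set T}.
Hypothesis S_im : {subset S <= codom f}.

Lemma connect_arcs_preim a b :
  connect (arcs_in preim_arcs (f @^-1: S)) a b = connect (arcs_in D S) (f a) (f b).
Proof.
by apply: connect_preim => [x y|x y /and3P [_ /S_im]]; rewrite // /arcs_in !inE.
Qed.

Lemma connect_und_preim a b :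
  connect (und_in preim_arcs (f @^-1: S)) a b = connect (und_in D S) (f a) (f b).
Proof.
by apply: connect_preim => [x y|x y /and3P [_ /S_im]]; rewrite // /und_in !inE.
Qed.

Lemma sources_preim : sources preim_arcs (f @^-1: S) = f @^-1: sources D S.
Proof.
apply/setP => a; rewrite !inE; case: (boolP (f a \in S)) => //= faS.
apply/forall_inP/forall_inP => [src_a _ /[dup] /S_im /codomP [x ->] fxS|src_fa x].
  by have := src_a x; rewrite !inE; apply.
by rewrite !inE => /src_fa.
Qed.

End InImage.

Lemma depth_le_preim S k :
  elim_depth D S k -> {subset S <= codom f} -> depth_le preim_arcs (f @^-1: S) k.
Proof.
elim=> {S k} [|S kf _ _ _ IHkf|S cS one|S s k _ _ sS _ IHk] S_im.
- by exists 0 => //; rewrite preimset0; apply: ED_empty.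
- apply: depth_le_components => _ /componentP [a + ->]; rewrite inE => faS.
  have CS : component D S (f a) \in components D S by apply/componentP; exists (f a).
  have -> : component preim_arcs (f @^-1: S) a = f @^-1: component D S (f a).
    by apply/setP => b; rewrite !inE (connect_und_preim S_im).
  apply: depth_leW (leq_bigmax_cond _ CS); apply: IHkf => // y /setIdP [yS _].
  exact: S_im.
- have /eqP/cards1P [s srcE] := one.
  have /setIdP [sS _] : s \in sources D S by rewrite srcE set11.
  have /codomP [a sE] := S_im _ sS.
  exists 1 => //; apply: ED_one_source; last first.
    rewrite (sources_preim S_im) srcE sE -(cards1 a); apply: eq_card => b.
    by rewrite !inE (inj_eq f_inj).
  apply/andP; split; first by apply/set0Pn; exists a; rewrite inE -sE.
  apply/forall_inP => b; rewrite inE => fbS.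
  apply/forall_inP => c; rewrite inE => fcS.
  by rewrite (connect_und_preim S_im); apply: connectedbP.
- have /setIdP [/S_im /codomP [a sE] _] := sS; subst s.
  apply: (depth_le_source (s := a)); first by rewrite (sources_preim S_im) inE.
  have -> : f @^-1: S :\: reach preim_arcs (f @^-1: S) a =
            f @^-1: (S :\: reach D S (f a)).
    by apply/setP => b; rewrite !inE (connect_arcs_preim S_im).
  by apply: IHk => y /setDP [/S_im].
Qed.

End Preimage.

Definition merge (T : eqType) (u v x : T) := if x == v then u else x.

Section Contraction.
Variables (T : finType) (D D' : {set T * T}) (u v : T).
Implicit Types (S R C : {set T}).

Hypothesis uv : u != v.
Hypothesis uvD : (u, v) \in D.
Hypothesis acD : acyclic D.
Hypothesis acD' : acyclic D'.
Hypothesis merge_arc : forall a b,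
  (a, b) \in D -> merge u v a != merge u v b -> (merge u v a, merge u v b) \in D'.
Hypothesis lift_arc : forall a b, (a, b) \in D' ->
  exists a0 b0, [/\ (a0, b0) \in D, merge u v a0 = a & merge u v b0 = b].

(* If v is gone but u is not, the merged vertex was eliminated together with v,
   and so were its descendants. *)
Definition contract_set S :=
  if v \in S then S :\ v else if u \in S then S :\: reach D S u else S.

Lemma merge_v : merge u v v = u.
Proof. by rewrite /merge eqxx. Qed.

Lemma merge_id x : x != v -> merge u v x = x.
Proof. by rewrite /merge => /negbTE ->. Qed.

Lemma merge_in_setD1 S x : u \in S -> x \in S -> merge u v x \in S :\ v.
Proof.
by move=> uS xS; rewrite /merge; case: eqVneq => [_|xv]; rewrite in_setD1 ?uv ?xv.
Qed.

Lemma mem_of_merge S x : v \in S -> merge u v x \in S -> x \in S.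
Proof. by rewrite /merge; case: eqVneq => [->|]. Qed.

Lemma v_notin_sources S : u \in S -> v \notin sources D S.
Proof.
move=> uS; rewrite inE negb_and; apply/orP; right.
by apply/forall_inP => /(_ u uS); rewrite uvD.
Qed.

Lemma u_in_pred_closed S : pred_closed D setT S -> v \in S -> u \in S.
Proof. by move=> clS; apply: clS uvD. Qed.

Lemma eq_arcs_off_uv S : u \notin S -> v \notin S ->
  {in S &, forall x y, ((x, y) \in D) = ((x, y) \in D')}.
Proof.
move=> uS vS x y xS yS.
have [xu xv] : x != u /\ x != v by split; [move: uS | move: vS]; apply: contraNneq => <-.
have [yu yv] : y != u /\ y != v by split; [move: uS | move: vS]; apply: contraNneq => <-.
apply/idP/idP => [xy|/lift_arc [a0 [b0 [ab0 aE bE]]]].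
  have := merge_arc xy; rewrite !merge_id //; apply.
  by apply: contraTneq xy => ->; apply: acyclic_irrefl.
have a0v : a0 != v by apply: contra_neq xu => a0v; rewrite -aE a0v merge_v.
have b0v : b0 != v by apply: contra_neq yu => b0v; rewrite -bE b0v merge_v.
by rewrite -aE -bE !merge_id.
Qed.

Lemma merge_connect S a b : u \in S -> connect (arcs_in D S) a b ->
  connect (arcs_in D' (S :\ v)) (merge u v a) (merge u v b).
Proof.
move=> uS; apply: connect_homo => x y /and3P [xS yS xy].
have [->|neq] := eqVneq (merge u v x) (merge u v y); first exact: connect0.
by apply: connect1; rewrite /arcs_in !merge_in_setD1 // merge_arc.
Qed.

Lemma contract_set_sub R S : R \subset S -> contract_set R \subset S :\ v.
Proof.
move=> RS; apply/subsetP => y; rewrite /contract_set.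
case: ifPn => [_ /setD1P [yv yR]|vR]; first by rewrite !inE yv (subsetP RS).
have yR : y \in (if u \in R then R :\: reach D R u else R) -> y \in R.
  by case: ifP => // _ /setDP [].
move=> /yR yR'; rewrite !inE (subsetP RS _ yR') andbT.
by apply: contraNneq vR => <-.
Qed.

Lemma depth_le_contract_set_off S k :
  elim_depth D S k -> v \notin S -> depth_le D' (contract_set S) k.
Proof.
move=> DSk vS; rewrite /contract_set (negbTE vS).
case: ifPn => uS; last first.
  by apply: eq_depth_le (elim_depth_le DSk); apply: eq_arcs_off_uv.
apply: eq_depth_le.
  by apply: eq_arcs_off_uv; rewrite !inE ?uS ?connect0 ?(negbTE vS) ?andbF.
apply: (depth_le_pred_closed acD DSk (subsetDl _ _)) => a b aS ab /setDP [bS bNr].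
rewrite inE aS andbT; move: bNr; apply: contra; rewrite !inE aS bS /= => ua.
by apply: connect_trans ua (connect1 _); rewrite /arcs_in aS bS ab.
Qed.

Lemma component_u_v S C : u \in S -> v \in S -> C \in components D S ->
  (u \in C) = (v \in C).
Proof.
move=> uS vS /componentP [x _ ->]; have clC := @component_closed _ D S x.
by apply/idP/idP => [uC|vC]; [apply: (clC _ _ uC vS) | apply: (clC _ _ vC uS)];
  rewrite /und_in uS vS uvD ?orbT.
Qed.

Lemma contract_set_component S C : v \in S -> pred_closed D setT S ->
  C \in components D S -> contract_set C = C :\ v.
Proof.
move=> vS clS CS; rewrite /contract_set; case: ifPn => // vC.
rewrite (component_u_v (u_in_pred_closed clS vS) vS CS) (negbTE vC).
by apply/setP => y; rewrite in_setD1; case: eqVneq => // ->; rewrite (negbTE vC).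
Qed.

Lemma contract_components S k : v \in S -> pred_closed D setT S ->
  (forall C, C \in components D S -> depth_le D' (C :\ v) k) ->
  depth_le D' (S :\ v) k.
Proof.
move=> vS clS Ck; have uS := u_in_pred_closed clS vS.
apply: depth_le_components => _ /componentP [x /setD1P [xv xS] ->].
set C := component D S x.
have CS : C \in components D S by apply/componentP; exists x.
have clC : und_closed D S C := @component_closed _ D S x.
have merge_inC z : z \in S -> (merge u v z \in C) = (z \in C).
  by rewrite /merge; case: eqVneq => [-> _|//]; apply: component_u_v uS vS CS.
have arc_inC p q : (p, q) \in D' -> p \in S -> q \in S -> (p \in C) = (q \in C).
  case/lift_arc => p0 [q0 [pq0 <- <-]] /(mem_of_merge vS) p0S /(mem_of_merge vS) q0S.
  rewrite !merge_inC //; apply/idP/idP => [p0C|q0C];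
    [apply: (clC _ _ p0C q0S) | apply: (clC _ _ q0C p0S)];
    by rewrite /und_in p0S q0S pq0 ?orbT.
have clCv : und_closed D' (S :\ v) (C :\ v).
  move=> a b /setD1P [_ aC] /setD1P [bv bS] /and3P [/setD1P [_ aS] _ ab].
  by rewrite in_setD1 bv; case/orP: ab => [/arc_inC <-|/arc_inC ->].
have xCv : x \in C :\ v by rewrite in_setD1 xv mem_component.
rewrite (component_restrict (setSD _ (component_sub D S x)) clCv xCv).
by apply: depth_le_component (Ck C CS) _ _; apply/componentP; exists x.
Qed.

Lemma contract_one_source S : v \in S -> pred_closed D setT S ->
  #|sources D S| = 1 -> elim_depth D' (S :\ v) 1.
Proof.
move=> vS clS one; have uS := u_in_pred_closed clS vS.
have /eqP/cards1P [s srcE] := one; have sS : s \in sources D S by rewrite srcE set11.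
have sv : s != v by apply: contraNneq (v_notin_sources uS) => <-.
apply: (elim_depth_one acD' (s := s)); first by rewrite in_setD1 sv (setIdP sS).1.
move=> y /setD1P [yv yS].
by have := merge_connect uS (unique_source_connect acD one sS yS); rewrite !merge_id.
Qed.

Lemma unreached_sub_contract_set S s x : v \in S -> u \in S ->
  s \in S -> s != v -> connect (arcs_in D' (S :\ v)) x s ->
  (S :\ v) :\: reach D' (S :\ v) x \subset contract_set (S :\: reach D S s).
Proof.
move=> vS uS sS sv xs; apply/subsetP => y /setDP [/[dup] ySv /setD1P [yv yS] yNr].
have sNy : ~~ connect (arcs_in D' (S :\ v)) s y.
  by move: yNr; apply: contra => sy; rewrite inE ySv (connect_trans xs sy).
have yR : y \in S :\: reach D S s.
  rewrite !inE yS andbT /=; move: sNy; apply: contra => sy.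
  by have := merge_connect uS sy; rewrite !merge_id.
rewrite /contract_set; case: ifPn => [_|vNR]; first by rewrite in_setD1 yv.
case: ifPn => // uR; rewrite in_setD yR andbT inE yR /=.
move: sNy; apply: contra => /(connect_subrel (arcs_in_subset (subsetDl S _))) uy.
have sv_conn : connect (arcs_in D S) s v by move: vNR; rewrite !inE vS andbT negbK.
apply: connect_trans (_ : connect _ s u) _.
  by have := merge_connect uS sv_conn; rewrite merge_v merge_id.
by have := merge_connect uS uy; rewrite !merge_id.
Qed.

Lemma contract_root S s k : v \in S -> pred_closed D setT S -> s \in sources D S ->
  depth_le D' (contract_set (S :\: reach D S s)) k -> depth_le D' (S :\ v) k.+1.
Proof.
move=> vS clS sS [j le_jk Rj]; have uS := u_in_pred_closed clS vS.
have sv : s != v by apply: contraNneq (v_notin_sources uS) => <-.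
have sSv : s \in S :\ v by rewrite in_setD1 sv (setIdP sS).1.
have [x xsrc xs] := source_connect acD' sSv.
apply: (depth_le_source xsrc); apply: depth_leW le_jk.
apply: (depth_le_pred_closed acD' Rj).
  exact: unreached_sub_contract_set (setIdP sS).1 sv xs.
move=> a b aR ab /setDP [bSv bNr].
have aSv := subsetP (contract_set_sub (subsetDl S (reach D S s))) a aR.
rewrite inE aSv andbT; move: bNr; apply: contra => /setIdP [_ xa].
by apply/setIdP; split; last by apply: connect_trans xa (connect1 _); apply/and3P.
Qed.

Lemma depth_le_contract_set S k :
  elim_depth D S k -> pred_closed D setT S -> depth_le D' (contract_set S) k.
Proof.
move=> DSk; elim: DSk (DSk) => {S k}
  [|S kf _ _ Dkf IHkf|S _ one|S s k _ _ sS DRk IHk] DSk clS.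
  by apply: depth_le_contract_set_off DSk _; rewrite inE.
all: have [vS|vNS] := boolP (v \in S); last exact: depth_le_contract_set_off DSk vNS.
all: rewrite /contract_set vS.
- apply: contract_components => // C CS; rewrite -(contract_set_component vS clS CS).
  apply: depth_leW (leq_bigmax_cond _ CS).
  exact: IHkf (Dkf C CS) (pred_closed_component clS CS).
- by exists 1 => //; apply: contract_one_source.
- exact: contract_root vS clS sS (IHk DRk (pred_closed_unreached (s := s) clS)).
Qed.

End Contraction.

Definition acyclic_orientation_on (T : finType) (V : {set T}) (e : rel T)
    (D : {set T * T}) :=
  [/\ forall x y, (x, y) \in D -> (x \in V) && (y \in V),
      {in V &, forall x y, e x y = ((x, y) \in D) || ((y, x) \in D)}
    & acyclic D].

Section Deletion.
Variables (T : finType) (V : {set T}) (e : rel T) (w : T) (D' : {set T * T}).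
Hypotheses (e_irr : irreflexive e) (e_sym : symmetric e) (wV : w \in V).
Hypothesis oD' : acyclic_orientation_on (V :\ w) e D'.

Definition sink_extension : {set T * T} :=
  [set p | (p \in D') || [&& p.2 == w, p.1 \in V :\ w & e p.1 w]].

Lemma arc_from_w y : ((w, y) \in D') = false.
Proof. by case: oD' => D'V _ _; apply: contraTF isT => /D'V; rewrite !inE eqxx. Qed.

Lemma arc_to_w x : ((x, w) \in D') = false.
Proof. by case: oD' => D'V _ _; apply: contraTF isT => /D'V; rewrite !inE eqxx andbF. Qed.

Lemma sink_extensionE x y : ((x, y) \in sink_extension) =
  ((x, y) \in D') || [&& y == w, x \in V :\ w & e x w].
Proof. by rewrite inE. Qed.

Lemma sink_extension_from_w y : ((w, y) \in sink_extension) = false.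
Proof. by rewrite sink_extensionE arc_from_w !inE eqxx andbF. Qed.

Lemma sink_extension_acyclic : acyclic sink_extension.
Proof.
case: oD' => _ _ acD' a b ab; apply/negP => ba.
have [bw|bw] := eqVneq b w.
  have ba_ne : b != a.
    by rewrite bw; apply: contraTneq ab => <-; rewrite bw sink_extension_from_w.
  have [z] := connect_neq_first ba ba_ne.
  by rewrite /arcs_in bw sink_extension_from_w !andbF.
have ab' : (a, b) \in D' by move: ab; rewrite sink_extensionE (negbTE bw) orbF.
have step y x : x != w -> arcs_in sink_extension setT y x ->
    y != w /\ arcs_in D' setT y x.
  rewrite /arcs_in !in_setT sink_extensionE => xw /orP [yx|/and3P [/eqP xw' _ _]].
    by split; [apply: contraTneq yx => ->; rewrite arc_from_w | apply/and3P].
  by rewrite xw' eqxx in xw.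
have aw : a != w by apply: contraTneq ab' => ->; rewrite arc_from_w.
have [_ ba'] := connect_bwd_closed (W := fun z => z != w) step aw ba.
by move: (acD' a b ab'); rewrite ba'.
Qed.

Lemma sink_extension_orientation : acyclic_orientation_on V e sink_extension.
Proof.
case: oD' => D'V eD' _; split; last exact: sink_extension_acyclic.
- move=> x y; rewrite sink_extensionE => /orP [/D'V|/and3P [/eqP -> xVw _]].
    by rewrite !inE => /andP [/andP [_ ->] /andP [_ ->]].
  by move: xVw; rewrite inE wV => /andP [_ ->].
- move=> x y xV yV; rewrite !sink_extensionE !inE xV yV !andbT.
  case: (eqVneq x w) => [->|xw]; case: (eqVneq y w) => [->|yw] //=;
    rewrite ?arc_from_w ?arc_to_w ?orbF ?e_irr //= ?(e_sym w).
  by apply: eD'; rewrite !inE ?xw ?yw.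
Qed.

Lemma depth_le_sink_extension k :
  elim_depth sink_extension V k -> depth_le D' (V :\ w) k.
Proof.
move=> DVk.
apply: eq_depth_le (depth_le_pred_closed sink_extension_acyclic DVk (subsetDl _ _) _).
  move=> x y _ /setD1P [yw _].
  by rewrite sink_extensionE (negbTE yw) orbF.
move=> a b aV ab /setD1P [bw _]; rewrite in_setD1 aV andbT.
by apply: contraTneq ab => ->; rewrite sink_extension_from_w.
Qed.

End Deletion.

Lemma contract_merge (T : finType) (e : rel T) u v x y : irreflexive e -> e x y ->
  (x, y) != (u, v) -> (x, y) != (v, u) ->
  contract e u v (merge u v x) (merge u v y).
Proof.
move=> e_irr exy; rewrite !xpair_eqE => xy_uv xy_vu.
have xy : x != y by apply: contraTneq exy => ->; rewrite e_irr.
rewrite /merge /contract; case: (eqVneq x v) => [xv|xv]; case: (eqVneq y v) => [yv|yv].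
- by rewrite xv yv eqxx in xy.
- have yu : y != u by move: xy_vu; rewrite xv eqxx.
  by rewrite eq_sym yu -xv exy eqxx orbT.
- have xu : x != u by move: xy_uv; rewrite yv eqxx andbT.
  by rewrite xu -yv exy eqxx !orbT.
- by rewrite xy exy.
Qed.

Section ContractionOrientation.
Variables (T : finType) (V : {set T}) (e : rel T) (u v : T) (D' : {set T * T}).
Hypotheses (e_irr : irreflexive e) (e_sym : symmetric e).
Hypotheses (uV : u \in V) (vV : v \in V) (uv : u != v) (euv : e u v).
Hypothesis oD' : acyclic_orientation_on (V :\ v) (contract e u v) D'.

Definition lift_orientation : {set T * T} :=
  [set q | [&& q.1 \in V, q.2 \in V, e q.1 q.2 &
                (q == (u, v)) || ((merge u v q.1, merge u v q.2) \in D')]].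

Lemma lift_orientationE x y : ((x, y) \in lift_orientation) =
  [&& x \in V, y \in V, e x y &
      ((x, y) == (u, v)) || ((merge u v x, merge u v y) \in D')].
Proof. by rewrite inE. Qed.

Lemma merge_uv : merge u v u = merge u v v.
Proof. by rewrite merge_v merge_id. Qed.

Lemma lift_orientation_merge_arc a b : (a, b) \in lift_orientation ->
  merge u v a != merge u v b -> (merge u v a, merge u v b) \in D'.
Proof.
rewrite lift_orientationE => /and4P [_ _ _ /orP [/eqP [-> ->]|//]].
by rewrite merge_uv eqxx.
Qed.

Lemma lift_orientation_lift_arc a b : (a, b) \in D' ->
  exists a0 b0, [/\ (a0, b0) \in lift_orientation, merge u v a0 = a & merge u v b0 = b].
Proof.
case: oD' => D'V eD' _ ab; have /andP [aVv bVv] := D'V a b ab.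
have /setD1P [av aV] := aVv; have /setD1P [bv bV] := bVv.
have : contract e u v a b by rewrite eD' // ab.
case/andP => ab_ne /or3P [eab|/andP [/eqP au evb]|/andP [/eqP bu eav]].
- by exists a, b; rewrite lift_orientationE aV bV eab !merge_id // ab orbT.
- exists v, b; rewrite merge_v merge_id // au; split => //.
  by rewrite lift_orientationE vV bV evb merge_v merge_id // -au ab orbT.
- exists a, v; rewrite merge_v merge_id // bu; split => //.
  by rewrite lift_orientationE aV vV eav merge_v merge_id // -bu ab orbT.
Qed.

Lemma merge_connect_lift a b : connect (arcs_in lift_orientation setT) a b ->
  connect (arcs_in D' setT) (merge u v a) (merge u v b).
Proof.
apply: connect_homo => x y /and3P [_ _ xy].
have [->|neq] := eqVneq (merge u v x) (merge u v y); first exact: connect0.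
by apply: connect1; rewrite /arcs_in !in_setT lift_orientation_merge_arc.
Qed.

Lemma lift_orientation_acyclic : acyclic lift_orientation.
Proof.
case: oD' => _ _ acD' a b ab; apply/negP => ba.
have [eq_ab|neq_ab] := eqVneq (merge u v a) (merge u v b); last first.
  by move: (acD' _ _ (lift_orientation_merge_arc ab neq_ab)); rewrite merge_connect_lift.
have /eqP [au bv] : (a, b) == (u, v).
  move: (ab); rewrite lift_orientationE eq_ab => /and4P [_ _ _ /orP [-> //|]].
  by rewrite (negbTE (acyclic_irrefl _ acD')).
have vu : v != u by rewrite eq_sym.
subst a b; have [z /and3P [_ _ vz] zu] := connect_neq_first ba vu.
have zv : z != v by apply: contraTneq vz => ->; rewrite lift_orientationE e_irr !andbF.
have uz : u != z.
  apply: contraTneq vz => <-; rewrite lift_orientationE xpair_eqE (negbTE vu).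
  by rewrite merge_v merge_id // (negbTE (acyclic_irrefl _ acD')) !andbF.
have uzD' : (u, z) \in D'.
  by have := lift_orientation_merge_arc vz; rewrite merge_v merge_id //; apply.
by move: (acD' _ _ uzD'); have := merge_connect_lift zu; rewrite !merge_id // => ->.
Qed.

Lemma lift_orientation_orientation : acyclic_orientation_on V e lift_orientation.
Proof.
case: oD' => D'V eD' _; split; last exact: lift_orientation_acyclic.
  by move=> x y; rewrite lift_orientationE => /and4P [-> ->].
move=> x y xV yV; rewrite !lift_orientationE xV yV (e_sym y x) /=.
case: (boolP (e x y)) => //= exy.
have [/eqP xy_uv|xy_uv] := boolP ((x, y) == (u, v)); first by case: xy_uv => -> ->.
have [/eqP xy_vu|xy_vu] := boolP ((x, y) == (v, u)).
  by case: xy_vu => -> ->; rewrite ?eqxx ?orbT.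
have yx_uv : (y, x) != (u, v) by apply: contraNneq xy_vu => -[-> ->].
rewrite (negbTE yx_uv) /= -eD' ?merge_in_setD1 //.
by symmetry; apply: contract_merge.
Qed.

Lemma depth_le_lift_orientation k :
  elim_depth lift_orientation V k -> depth_le D' (V :\ v) k.
Proof.
case: oD' => _ _ acD' DVk.
have := depth_le_contract_set uv _ lift_orientation_acyclic acD'
  lift_orientation_merge_arc lift_orientation_lift_arc DVk.
rewrite /contract_set vV; apply.
  by rewrite lift_orientationE uV vV euv eqxx.
by move=> a b _; rewrite lift_orientationE => /and4P [-> _ _ _].
Qed.

End ContractionOrientation.

Lemma contract_sym (T : finType) (e : rel T) u v :
  symmetric e -> symmetric (contract e u v).
Proof.
move=> e_sym x y; rewrite /contract eq_sym (e_sym x y) (e_sym v y) (e_sym x v).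
by case: (e y x); case: (x == u); case: (y == u); case: (e y v); case: (e v x).
Qed.

Section InducedMinorSteps.
Variables (T : finType) (eH : rel T).
Hypotheses (eH_sym : symmetric eH) (eH_irr : irreflexive eH).

Lemma im_reach_sym V e : im_reach [set: T] eH V e -> symmetric e.
Proof. by elim=> // {}V {}e u v _ e_sym *; apply: contract_sym. Qed.

Lemma im_reach_irr V e : im_reach [set: T] eH V e -> irreflexive e.
Proof. by elim=> // {}V {}e u v *; move=> x; rewrite /contract eqxx. Qed.

Lemma im_reach_orientation V e D' : im_reach [set: T] eH V e ->
  acyclic_orientation_on V e D' ->
  exists2 D, acyclic_orientation_on [set: T] eH D &
    forall k, elim_depth D [set: T] k -> depth_le D' V k.
Proof.
move=> reachV; elim: reachV D' =>
  [|{}V {}e w reachV IHV wV|{}V {}e u v reachV IHV uV vV uv euv] D' oD'.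
- by exists D' => // k; apply: elim_depth_le.
- have e_irr := im_reach_irr reachV; have e_sym := im_reach_sym reachV.
  have [D oD Dk] := IHV _ (sink_extension_orientation e_irr e_sym wV oD').
  exists D => // k /Dk /depth_le_trans; apply.
  exact: depth_le_sink_extension oD'.
- have e_irr := im_reach_irr reachV; have e_sym := im_reach_sym reachV.
  have [D oD Dk] := IHV _ (lift_orientation_orientation e_irr e_sym uV uv oD').
  exists D => // k /Dk /depth_le_trans; apply.
  exact: depth_le_lift_orientation e_irr uV vV uv euv oD'.
Qed.

End InducedMinorSteps.

Lemma pboolP (P : Prop) : pbool P <-> P.
Proof. by rewrite /pbool; case: excluded_middle_informative. Qed.

Section Dtd.
Variable T : finType.
Implicit Types (D : {set T * T}) (e : rel T).

Lemma acyclic_orientationP e D :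
  reflect (acyclic_orientation_on [set: T] e D) (acyclic_orientation e D).
Proof.
apply: (iffP andP) => [[/forallP eD /forallP acD]|[_ eD acD]]; split.
- by move=> x y; rewrite !in_setT.
- by move=> x y _ _; apply/eqP; have /forallP := eD x; apply.
- by move=> x y; have /forallP /(_ y) /implyP := acD x; apply.
- by apply/forallP => x; apply/forallP => y; rewrite eD ?in_setT.
- by apply/forallP => x; apply/forallP => y; apply/implyP; apply: acD.
Qed.

Lemma dtd_dag_le_card D : dtd_dag D <= #|T|.
Proof.
by apply: (big_rec (fun m => m <= #|T|)) => // i m _; apply: leq_trans (geq_minr _ _).
Qed.

Lemma dtd_dag_le D k : depth_le D [set: T] k -> dtd_dag D <= k.
Proof.
case=> j le_jk Dj; apply: leq_trans le_jk.
have [lt_jT|le_Tj] := ltnP j #|T|.+1; last first.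
  exact: leq_trans (dtd_dag_le_card D) (ltnW le_Tj).
rewrite /dtd_dag unlock; have : Ordinal lt_jT \in index_enum _ := mem_index_enum _.
elim: index_enum => //= i r IHr; rewrite inE => /predU1P [<-|/IHr].
  by rewrite (proj2 (pboolP _) Dj) geq_minl.
by case: ifP => // _; apply: leq_trans (geq_minr _ _).
Qed.

Lemma leq_dtd_dag D n : n <= #|T| ->
  (forall k, elim_depth D [set: T] k -> n <= k) -> n <= dtd_dag D.
Proof.
move=> nT nk; apply: (big_ind (fun m => n <= m)) => // [a b na nb|k /pboolP /nk //].
by rewrite leq_min na nb.
Qed.

End Dtd.

Section Image.
Variables (T T' : finType) (f : T' -> T) (V : {set T}) (e : rel T) (eI : rel T').
Hypotheses (f_inj : injective f) (fV : [set f x | x in T'] = V).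
Hypothesis eI_e : forall x y, eI x y = e (f x) (f y).

Definition image_arcs (D : {set T' * T'}) : {set T * T} :=
  [set (f p.1, f p.2) | p in D].

Lemma mem_image_arcs D a b : ((f a, f b) \in image_arcs D) = ((a, b) \in D).
Proof.
have f2_inj : injective (fun p : T' * T' => (f p.1, f p.2)).
  by move=> [a1 b1] [a2 b2] [/f_inj -> /f_inj ->].
exact: (mem_imset _ (a, b) f2_inj).
Qed.

Lemma image_arcsP D x y : (x, y) \in image_arcs D ->
  exists a b, [/\ x = f a, y = f b & (a, b) \in D].
Proof. by case/imsetP => -[a b] ab [-> ->]; exists a, b. Qed.

Lemma preim_image_arcs D : preim_arcs f (image_arcs D) = D.
Proof. by apply/setP => -[a b]; rewrite inE mem_image_arcs. Qed.

Lemma image_arcs_orientation D :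
  acyclic_orientation eI D -> acyclic_orientation_on V e (image_arcs D).
Proof.
have fV' a : f a \in V by rewrite -fV imset_f.
case/acyclic_orientationP => _ eID acD; split.
- by move=> x y /image_arcsP [a [b [-> -> _]]]; rewrite !fV'.
- move=> x y; rewrite -fV => /imsetP [a _ ->] /imsetP [b _ ->].
  by rewrite !mem_image_arcs -eI_e eID ?in_setT.
- move=> x y /image_arcsP [a [b [-> -> ab]]]; apply/negP => ba.
  have lift c y' : arcs_in (image_arcs D) setT (f c) y' ->
      exists2 d, y' = f d & arcs_in D setT c d.
    case/and3P => _ _ /image_arcsP [c' [d [/f_inj cE -> cd]]]; subst c'.
    by exists d; rewrite // /arcs_in !in_setT.
  have [a' /f_inj <- ba'] := connect_lift lift ba.
  by move: (acD a b ab); rewrite ba'.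
Qed.

End Image.

Theorem mainTheorem7 (T : finType) (eH : rel T) (T' : finType) (eI : rel T') :
  symmetric eH -> irreflexive eH ->
  symmetric eI -> irreflexive eI ->
  induced_minor eI eH ->
  dtd eI <= dtd eH.
Proof.
move=> eH_sym eH_irr _ _ [V [e [reachV [f [f_inj fV eI_e]]]]].
apply/bigmax_leqP => DI oDI.
have [DH /acyclic_orientationP oDH DH_depth] :=
  im_reach_orientation eH_sym eH_irr reachV (image_arcs_orientation f_inj fV eI_e oDI).
apply: leq_trans (leq_bigmax_cond _ oDH); apply: leq_dtd_dag.
  exact: leq_trans (dtd_dag_le_card DI) (leq_card f f_inj).
move=> k /DH_depth [j le_jk DVj]; apply: leq_trans le_jk; apply: dtd_dag_le.
have V_im : {subset V <= codom f}.
  by move=> y; rewrite -fV => /imsetP [x _ ->]; apply: codom_f.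
have V_preim : f @^-1: V = [set: T'] by apply/setP => x; rewrite !inE -fV imset_f.
by have := depth_le_preim f_inj DVj V_im; rewrite preim_image_arcs // V_preim.
Qed.
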